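(* Let $A\in\mathscr{C}^-$, $B\in\mathscr{C}$ and $f\in\mathscr{C}(A,B)$. Choose a distinguished triangle $S_A[-1]\overset{s_A}{\to}A\overset{w_A}{\to}W_A\to S_A$ with $S_A\in\mathcal{S}$, $W_A\in\mathcal{W}$, and then a distinguished triangle $S_A[-1]\overset{f\circ s_A}{\to}B\overset{m_f}{\to}M_f\to S_A$. Then: (1) $\underline{m}_f\circ\underline{f}=0$ in $\underline{\mathscr{C}}$; (2) for every $Y\in\mathscr{C}^+$, composition with $\underline{m}_f$ gives a bijection \[ -\circ\underline{m}_f\colon\underline{\mathscr{C}}(M_f,Y)\to\{\beta\in\underline{\mathscr{C}}(B,Y)\mid\beta\circ\underline{f}=0\}; \] (3) if $B\in\mathscr{C}^-$, then $M_f\in\mathscr{C}^-$.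
   Context: $\mathscr{C}$ is a triangulated category with shift $[1]$; subcategories are full, additive, closed under isomorphisms and direct summands. $\mathrm{Ext}^1(X,Y)=\mathscr{C}(X,Y[1])$. $\mathcal{M}\ast\mathcal{N}$ is the full subcategory of objects $C$ admitting a distinguished triangle $M\to C\to N\to M[1]$ with $M\in\mathcal{M}$, $N\in\mathcal{N}$. A cotorsion pair $(\mathcal{U},\mathcal{V})$: $\mathrm{Ext}^1(\mathcal{U},\mathcal{V})=0$ and $\mathscr{C}=\mathcal{U}\ast\mathcal{V}[1]$. Fix a twin cotorsion pair, i.e. cotorsion pairs $(\mathcal{S},\mathcal{T}),(\mathcal{U},\mathcal{V})$ with $\mathrm{Ext}^1(\mathcal{S},\mathcal{V})=0$. Put $\mathcal{W}=\mathcal{T}\cap\mathcal{U}$, $\mathscr{C}^-=\mathcal{S}[-1]\ast\mathcal{W}$, $\mathscr{C}^+=\mathcal{W}\ast\mathcal{V}[1]$. $\underline{\mathscr{C}}$ is the ideal quotient of $\mathscr{C}$ by morphisms factoring through objects of $\mathcal{W}$, and $\underline{f}$ denotes the image of $f$. *)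

From mathcomp Require Import all_boot all_algebra.
Set Implicit Arguments. Unset Strict Implicit. Unset Printing Implicit Defensive.
Import GRing.Theory.
Local Open Scope ring_scope.

Record TriData := {
  Obj :> Type;
  Mor : Obj -> Obj -> zmodType;
  cmp : forall X Y Z : Obj, Mor Y Z -> Mor X Y -> Mor X Z;
  idm : forall X : Obj, Mor X X;
  sh : Obj -> Obj;
  shm : forall X Y : Obj, Mor X Y -> Mor (sh X) (sh Y);
  dist : forall X Y Z : Obj, Mor X Y -> Mor Y Z -> Mor Z (sh X) -> Prop }.

Arguments Mor {_}.
Arguments cmp {_ _ _ _}.
Arguments idm {_}.
Arguments sh {_}.
Arguments shm {_ _ _}.
Arguments dist {_ _ _ _}.

Section Tri.
Context {C : TriData}.

Definition is_iso (X Y : C) (f : Mor X Y) : Prop :=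
  exists g : Mor Y X, cmp g f = idm X /\ cmp f g = idm Y.

Definition iso (X Y : C) : Prop := exists f : Mor X Y, is_iso f.

Definition is_zero (Z : C) : Prop :=
  (forall X (f g : Mor Z X), f = g) /\ (forall X (f g : Mor X Z), f = g).

Definition biprod (Y Z P : C) (i1 : Mor Y P) (i2 : Mor Z P)
    (p1 : Mor P Y) (p2 : Mor P Z) : Prop :=
  [/\ cmp p1 i1 = idm Y, cmp p2 i2 = idm Z, cmp p2 i1 = 0, cmp p1 i2 = 0
    & cmp i1 p1 + cmp i2 p2 = idm P].

Definition tri_iso (X Y Z X' Y' Z' : C)
    (f : Mor X Y) (g : Mor Y Z) (h : Mor Z (sh X))
    (f' : Mor X' Y') (g' : Mor Y' Z') (h' : Mor Z' (sh X')) : Prop :=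
  exists (a : Mor X X') (b : Mor Y Y') (c : Mor Z Z'),
    [/\ is_iso a, is_iso b & is_iso c] /\
    [/\ cmp b f = cmp f' a, cmp c g = cmp g' b
      & cmp (shm a) h = cmp h' c].

Record IsTriangulated : Prop := {
  cmp_assoc : forall (W X Y Z : C) (f : Mor W X) (g : Mor X Y) (h : Mor Y Z),
      cmp h (cmp g f) = cmp (cmp h g) f;
  cmp_idl : forall (X Y : C) (f : Mor X Y), cmp (idm Y) f = f;
  cmp_idr : forall (X Y : C) (f : Mor X Y), cmp f (idm X) = f;
  cmp_addl : forall (X Y Z : C) (g1 g2 : Mor Y Z) (f : Mor X Y),
      cmp (g1 + g2) f = cmp g1 f + cmp g2 f;
  cmp_addr : forall (X Y Z : C) (g : Mor Y Z) (f1 f2 : Mor X Y),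
      cmp g (f1 + f2) = cmp g f1 + cmp g f2;
  zero_exists : exists Z : C, is_zero Z;
  biprod_exists : forall Y Z : C, exists (P : C) (i1 : Mor Y P) (i2 : Mor Z P)
      (p1 : Mor P Y) (p2 : Mor P Z), biprod i1 i2 p1 p2;
  shm_comp : forall (X Y Z : C) (g : Mor Y Z) (f : Mor X Y),
      shm (cmp g f) = cmp (shm g) (shm f);
  shm_id : forall X : C, shm (idm X) = idm (sh X);
  shm_add : forall (X Y : C) (f g : Mor X Y), shm (f + g) = shm f + shm g;
  shm_inj : forall (X Y : C) (f g : Mor X Y), shm f = shm g -> f = g;
  shm_surj : forall (X Y : C) (g : Mor (sh X) (sh Y)), exists f, shm f = g;
  sh_esurj : forall Y : C, exists X : C, iso (sh X) Y;
  dist_iso : forall (X Y Z X' Y' Z' : C)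
      (f : Mor X Y) (g : Mor Y Z) (h : Mor Z (sh X))
      (f' : Mor X' Y') (g' : Mor Y' Z') (h' : Mor Z' (sh X')),
      dist f g h -> tri_iso f g h f' g' h' -> dist f' g' h';
  dist_id : forall X Z : C, is_zero Z ->
      dist (idm X) (0 : Mor X Z) (0 : Mor Z (sh X));
  dist_ext : forall (X Y : C) (f : Mor X Y),
      exists (Z : C) (g : Mor Y Z) (h : Mor Z (sh X)), dist f g h;
  dist_rot : forall (X Y Z : C) (f : Mor X Y) (g : Mor Y Z) (h : Mor Z (sh X)),
      dist f g h <-> dist g h (- shm f);
  dist_mor : forall (X Y Z X' Y' Z' : C)
      (f : Mor X Y) (g : Mor Y Z) (h : Mor Z (sh X))
      (f' : Mor X' Y') (g' : Mor Y' Z') (h' : Mor Z' (sh X'))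
      (a : Mor X X') (b : Mor Y Y'),
      dist f g h -> dist f' g' h' -> cmp b f = cmp f' a ->
      exists c : Mor Z Z', cmp c g = cmp g' b /\ cmp h' c = cmp (shm a) h;
  dist_oct : forall (X Y Z Z' X' Y' : C) (f : Mor X Y) (g : Mor Y Z)
      (f1 : Mor Y Z') (f2 : Mor Z' (sh X))
      (g1 : Mor Z X') (g2 : Mor X' (sh Y))
      (h1 : Mor Z Y') (h2 : Mor Y' (sh X)),
      dist f f1 f2 -> dist g g1 g2 -> dist (cmp g f) h1 h2 ->
      exists (u : Mor Z' Y') (v : Mor Y' X'),
        [/\ dist u v (cmp (shm f1) g2),
            cmp u f1 = cmp h1 g, cmp h2 u = f2,
            cmp v h1 = g1 & cmp g2 v = cmp (shm f) h2] }.

(* Subcategories (identified with predicates on objects): full, additive,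
   closed under isomorphisms and direct summands. *)
Definition subcat (P : C -> Prop) : Prop :=
  [/\ forall X Y : C, iso X Y -> P X -> P Y,
      exists Z : C, is_zero Z /\ P Z,
      (forall (Y Z B : C) i1 i2 p1 p2, @biprod Y Z B i1 i2 p1 p2 ->
          P Y -> P Z -> P B)
    & (forall (Y Z B : C) i1 i2 p1 p2, @biprod Y Z B i1 i2 p1 p2 ->
          P B -> P Y /\ P Z)].

Definition Ext1_zero (P Q : C -> Prop) : Prop :=
  forall X Y : C, P X -> Q Y -> forall h : Mor X (sh Y), h = 0.

Definition star (P Q : C -> Prop) (X : C) : Prop :=
  exists (M N : C) (f : Mor M X) (g : Mor X N) (h : Mor N (sh M)),
    [/\ P M, Q N & dist f g h].

Definition shift1 (P : C -> Prop) (N : C) : Prop :=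
  exists V : C, P V /\ iso N (sh V).

(* P[-1] : objects M with M[1] isomorphic to an object of P
   (i.e. M isomorphic to S[-1] for some S in P) *)
Definition shiftm1 (P : C -> Prop) (M : C) : Prop :=
  exists S : C, P S /\ iso (sh M) S.

Definition cotorsion (U V : C -> Prop) : Prop :=
  Ext1_zero U V /\ forall X : C, star U (shift1 V) X.

Definition twin_cotorsion (S T U V : C -> Prop) : Prop :=
  [/\ cotorsion S T, cotorsion U V & Ext1_zero S V].

Definition Wcl (T U : C -> Prop) (X : C) : Prop := T X /\ U X.

Definition Cminus (S T U : C -> Prop) (X : C) : Prop :=
  star (shiftm1 S) (Wcl T U) X.

Definition Cplus (T U V : C -> Prop) (X : C) : Prop :=
  star (Wcl T U) (shift1 V) X.

(* f factors through an object of W; in the ideal quotient C/[W],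
   underline f = underline g  iff  factors_through W (f - g). *)
Definition factors_through (W : C -> Prop) (X Y : C) (f : Mor X Y) : Prop :=
  exists (Z : C) (a : Mor X Z) (b : Mor Z Y), W Z /\ f = cmp b a.

End Tri.

From mathcomp Require Import all_boot all_algebra.
Import GRing.Theory.
Local Open Scope ring_scope.
Set Implicit Arguments. Unset Strict Implicit.

(* Since Ext^1(S, T) = 0, every morphism from S_A[-1] into an object of W
   vanishes. So a morphism out of B that kills f modulo W kills f s_A, and then
   factors through m_f; together with TR3 (m_f f factors through w_A) this gives
   (1) and the surjectivity in (2). For injectivity, a morphism S_A -> Y with
   Y in C^+ factors through the W-part of Y, because Ext^1(S, V) = 0.
   For (3), f s_A factors through the S[-1]-part S_1 -> B of B, and the
   octahedral axiom shows M_f to be an extension of an object of W by the cone L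
   of S_A[-1] -> S_1. Embedding S_A into an object of W with cokernel in S puts
   L in C^-, and C^- * W is contained in C^- because the halves of cotorsion
   pairs are closed under extensions. *)

Lemma morph_add0 (M N : zmodType) (h : M -> N) :
  {morph h : x y / x + y} -> h 0 = 0.
Proof. by move=> hD; apply: (addrI (h 0)); rewrite -hD !addr0. Qed.

Lemma morph_addN (M N : zmodType) (h : M -> N) :
  {morph h : x y / x + y} -> {morph h : x / - x}.
Proof. by move=> hD x; apply: (addrI (h x)); rewrite -hD !subrr (morph_add0 hD). Qed.

Section Triangulated.
Context {C : TriData} (HC : @IsTriangulated C).

Lemma cmp0l (X Y Z : C) (f : Mor X Y) : cmp (0 : Mor Y Z) f = 0.
Proof. exact: (@morph_add0 _ _ (cmp^~ f) (fun g1 g2 => cmp_addl HC g1 g2 f)). Qed.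

Lemma cmp0r (X Y Z : C) (g : Mor Y Z) : cmp g (0 : Mor X Y) = 0.
Proof. exact: (morph_add0 (cmp_addr HC g)). Qed.

Lemma cmpNl (X Y Z : C) (g : Mor Y Z) (f : Mor X Y) : cmp (- g) f = - cmp g f.
Proof. exact: (@morph_addN _ _ (cmp^~ f) (fun g1 g2 => cmp_addl HC g1 g2 f)). Qed.

Lemma cmpNr (X Y Z : C) (g : Mor Y Z) (f : Mor X Y) : cmp g (- f) = - cmp g f.
Proof. exact: (morph_addN (cmp_addr HC g)). Qed.

Lemma cmpBl (X Y Z : C) (g1 g2 : Mor Y Z) (f : Mor X Y) :
  cmp (g1 - g2) f = cmp g1 f - cmp g2 f.
Proof. by rewrite (cmp_addl HC) cmpNl. Qed.

Lemma shm0 (X Y : C) : shm (0 : Mor X Y) = 0.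
Proof. exact: (morph_add0 (@shm_add _ HC X Y)). Qed.

Lemma shmN (X Y : C) (f : Mor X Y) : shm (- f) = - shm f.
Proof. exact: (morph_addN (@shm_add _ HC X Y)). Qed.

Lemma iso_refl (X : C) : iso X X.
Proof. by exists (idm X), (idm X); rewrite (cmp_idl HC). Qed.

Lemma iso_sym (X Y : C) : iso X Y -> iso Y X.
Proof. by case=> f [g [gf fg]]; exists g, f. Qed.

Lemma dist_rotate (X Y Z : C) (f : Mor X Y) (g : Mor Y Z) (h : Mor Z (sh X)) :
  dist f g h -> dist g h (- shm f).
Proof. exact: proj1 (dist_rot HC f g h). Qed.

Lemma dist_unrotate (X Y Z : C) (f : Mor X Y) (g : Mor Y Z) (h : Mor Z (sh X)) :
  dist g h (- shm f) -> dist f g h.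
Proof. exact: proj2 (dist_rot HC f g h). Qed.

Lemma dist_iso_cone (X Y Z Z' : C) (f : Mor X Y) (g : Mor Y Z) (h : Mor Z (sh X))
    (k : Mor Z Z') (k' : Mor Z' Z) :
  cmp k' k = idm Z -> cmp k k' = idm Z' -> dist f g h -> dist f (cmp k g) (cmp h k').
Proof.
move=> k'k kk' Hd; apply: (dist_iso HC Hd).
exists (idm X), (idm Y), k; split; first split.
- by exists (idm X); rewrite (cmp_idl HC).
- by exists (idm Y); rewrite (cmp_idl HC).
- by exists k'.
by rewrite (cmp_idl HC) !(cmp_idr HC) (shm_id HC) (cmp_idl HC) -(cmp_assoc HC) k'k
  (cmp_idr HC).
Qed.

Lemma dist_rotate_back (X Y Z K : C) (f : Mor X Y) (g : Mor Y Z) (h : Mor Z (sh X)) :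
  iso (sh K) Z -> dist f g h -> exists (k : Mor K X) (g' : Mor Y (sh K)), dist k f g'.
Proof.
case=> k [k' [k'k kk']] Hd.
have [k0 Hk0] := shm_surj HC (cmp h k).
exists (- k0), (cmp k' g); apply: dist_unrotate.
by rewrite shmN opprK Hk0; apply: dist_iso_cone.
Qed.

Lemma star_shift1P (P Q : C -> Prop) (X : C) : star P (shift1 Q) X ->
  exists (M V : C) (u : Mor M X) (g : Mor X (sh V)) (h : Mor (sh V) (sh M)),
    [/\ P M, Q V & dist u g h].
Proof.
case=> M [N [u [g [h [PM [V [QV [k [k' [k'k kk']]]]] Hd]]]]].
by exists M, V, u, (cmp k g), (cmp h k'); split=> //; apply: dist_iso_cone.
Qed.

Lemma dist_comp0 (X Y Z : C) (f : Mor X Y) (g : Mor Y Z) (h : Mor Z (sh X)) :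
  dist f g h -> cmp g f = 0.
Proof.
move=> Hd; have [Z0 HZ0] := zero_exists HC.
have [c [<- _]] := dist_mor HC (a := idm X) (b := f) (dist_id HC X HZ0) Hd erefl.
exact: cmp0r.
Qed.

Lemma dist_lift (X Y Z W : C) (f : Mor X Y) (g : Mor Y Z) (h : Mor Z (sh X))
    (p : Mor W Y) : dist f g h -> cmp g p = 0 -> exists c, cmp f c = p.
Proof.
move=> Hd gp0; have [Z0 HZ0] := zero_exists HC.
have E : cmp (0 : Mor Z0 Z) (0 : Mor W Z0) = cmp g p by rewrite gp0 cmp0l.
have [c [_ Hc]] := dist_mor HC (dist_rotate (dist_id HC W HZ0)) (dist_rotate Hd) E.
have [c' Hc'] := shm_surj HC c.
exists c'; apply: (shm_inj HC); apply: oppr_inj.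
by rewrite (shm_comp HC) -cmpNl Hc' Hc cmpNr (shm_id HC) (cmp_idr HC).
Qed.

Lemma dist_extend (X Y Z W : C) (f : Mor X Y) (g : Mor Y Z) (h : Mor Z (sh X))
    (p : Mor Y W) : dist f g h -> cmp p f = 0 -> exists c, cmp c g = p.
Proof.
move=> Hd pf0; have [Z0 HZ0] := zero_exists HC.
have E : cmp (shm p) (- shm f) = cmp (0 : Mor Z0 (sh W)) (0 : Mor (sh X) Z0).
  by rewrite cmpNr -(shm_comp HC) pf0 shm0 oppr0 cmp0r.
have [c [Hc _]] := dist_mor HC (dist_rotate (dist_rotate (dist_rotate Hd)))
  (dist_rotate (dist_rotate (dist_id HC W HZ0))) E.
have [c' Hc'] := shm_surj HC c.
exists c'; apply: (shm_inj HC); apply: oppr_inj.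
by rewrite (shm_comp HC) -cmpNr Hc' Hc cmpNl (shm_id HC) (cmp_idl HC).
Qed.

Lemma retract_biprod (X M : C) (r : Mor X M) (u : Mor M X) :
  cmp u r = idm X ->
  exists (K : C) (i2 : Mor K M) (p1 : Mor M X) (p2 : Mor M K), biprod r i2 p1 p2.
Proof.
move=> ur; have [K [c [d Hd]]] := dist_ext HC r.
have d0 : d = 0.
  have := dist_comp0 (dist_rotate (dist_rotate Hd)).
  rewrite cmpNl => /eqP; rewrite oppr_eq0 => /eqP rd0.
  by rewrite -[d](cmp_idl HC) -(shm_id HC) -ur (shm_comp HC) -(cmp_assoc HC) rd0 cmp0r.
rewrite {}d0 in Hd; have cr0 := dist_comp0 Hd.
have [s cs] := dist_lift (p := idm K) (dist_rotate Hd) (cmp0l _ _).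
have [p [pr ps]] : exists p : Mor M X, cmp p r = idm X /\ cmp p s = 0.
  exists (cmp u (idm M - cmp s c)); rewrite -!(cmp_assoc HC) !cmpBl !(cmp_idl HC).
  by rewrite -!(cmp_assoc HC) cr0 cs cmp0r (cmp_idr HC) subr0 subrr cmp0r.
exists K, s, p, c; split => //.
suff e0 : idm M - cmp r p - cmp s c = 0.
  by apply/eqP; rewrite eq_sym -subr_eq0 opprD addrA e0.
have er : cmp (idm M - cmp r p - cmp s c) r = 0.
  by rewrite !cmpBl (cmp_idl HC) -!(cmp_assoc HC) pr cr0 (cmp_idr HC) cmp0r subrr subr0.
have [t te] := dist_extend Hd er.
have es : cmp (idm M - cmp r p - cmp s c) s = 0.
  by rewrite !cmpBl (cmp_idl HC) -!(cmp_assoc HC) ps cs (cmp_idr HC) cmp0r subr0 subrr.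
by rewrite -te -[t](cmp_idr HC) -cs (cmp_assoc HC) te es cmp0l.
Qed.

Lemma Ext1_zero_desusp (P Q : C -> Prop) (Z Y : C) :
  Ext1_zero P Q -> P (sh Z) -> Q Y -> forall p : Mor Z Y, p = 0.
Proof. by move=> PQ PZ QY p; apply: (shm_inj HC); rewrite shm0; apply: PQ. Qed.

Lemma Ext1_zero_extension_l (P Q : C -> Prop) (X Y Z : C)
    (a : Mor X Y) (b : Mor Y Z) (c : Mor Z (sh X)) :
  Ext1_zero P Q -> dist a b c -> P X -> P Z ->
  forall W, Q W -> forall g : Mor Y (sh W), g = 0.
Proof.
move=> PQ Hd PX PZ W QW g.
have [g' <-] := dist_extend Hd (PQ _ _ PX QW (cmp g a)).
by rewrite (PQ _ _ PZ QW g') cmp0l.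
Qed.

Lemma Ext1_zero_extension_r (P Q : C -> Prop) (X Y Z : C)
    (a : Mor X Y) (b : Mor Y Z) (c : Mor Z (sh X)) :
  Ext1_zero P Q -> dist a b c -> Q X -> Q Z ->
  forall M, P M -> forall g : Mor M (sh Y), g = 0.
Proof.
move=> PQ Hd QX QZ M PM g.
have bg0 : cmp (- shm b) g = 0 by rewrite cmpNl (PQ _ _ PM QZ (cmp (shm b) g)) oppr0.
have [g' <-] := dist_lift (dist_rotate (dist_rotate (dist_rotate Hd))) bg0.
by rewrite (PQ _ _ PM QX g') cmp0r.
Qed.

Lemma cotorsion_perp_l (P Q : C -> Prop) (X : C) : subcat P -> cotorsion P Q ->
  (forall W, Q W -> forall g : Mor X (sh W), g = 0) -> P X.
Proof.
case=> _ _ _ Psummand [_ Pstar] Xperp.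
have [M [W [u [g [h [PM QW Hd]]]]]] := star_shift1P (Pstar X).
have g_id0 : cmp g (idm X) = 0 by rewrite (Xperp _ QW g) cmp0l.
have [r ur] := dist_lift Hd g_id0.
have [K [i2 [p1 [p2 Hb]]]] := retract_biprod ur.
exact: (Psummand _ _ _ _ _ _ _ Hb PM).1.
Qed.

Lemma cotorsion_perp_r (P Q : C -> Prop) (Y : C) : subcat Q -> cotorsion P Q ->
  (forall M, P M -> forall g : Mor M (sh Y), g = 0) -> Q Y.
Proof.
case=> _ _ _ Qsummand [_ Pstar] Yperp.
have [M [W [a [b [c [PM QW Hd]]]]]] := star_shift1P (Pstar (sh Y)).
have id_a0 : cmp (idm (sh Y)) a = 0 by rewrite (Yperp _ PM a) cmp0r.
have [c' c'b] := dist_extend Hd id_a0.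
have [b0 Hb0] := shm_surj HC b; have [c0 Hc0] := shm_surj HC c'.
have c0b0 : cmp c0 b0 = idm Y.
  by apply: (shm_inj HC); rewrite (shm_comp HC) Hb0 Hc0 c'b (shm_id HC).
have [K [i2 [p1 [p2 Hb]]]] := retract_biprod c0b0.
exact: (Qsummand _ _ _ _ _ _ _ Hb QW).1.
Qed.

Lemma cotorsion_ext_closed_l (P Q : C -> Prop) (X Y Z : C)
    (a : Mor X Y) (b : Mor Y Z) (c : Mor Z (sh X)) :
  subcat P -> cotorsion P Q -> dist a b c -> P X -> P Z -> P Y.
Proof.
move=> HP HPQ Hd PX PZ.
exact: cotorsion_perp_l HP HPQ (Ext1_zero_extension_l HPQ.1 Hd PX PZ).
Qed.

Lemma cotorsion_ext_closed_r (P Q : C -> Prop) (X Y Z : C)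
    (a : Mor X Y) (b : Mor Y Z) (c : Mor Z (sh X)) :
  subcat Q -> cotorsion P Q -> dist a b c -> Q X -> Q Z -> Q Y.
Proof.
move=> HQ HPQ Hd QX QZ.
exact: cotorsion_perp_r HQ HPQ (Ext1_zero_extension_r HPQ.1 Hd QX QZ).
Qed.

Lemma shiftm1_sh (P : C -> Prop) (M : C) : subcat P -> shiftm1 P M -> P (sh M).
Proof. by case=> Piso _ _ _ [S' [PS' /iso_sym iso_S']]; apply: Piso iso_S' PS'. Qed.

Definition biprod_closed (W : C -> Prop) : Prop :=
  forall (Y Z B : C) (i1 : Mor Y B) (i2 : Mor Z B) (p1 : Mor B Y) (p2 : Mor B Z),
    biprod i1 i2 p1 p2 -> W Y -> W Z -> W B.

Lemma Wcl_biprod_closed (T U : C -> Prop) :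
  subcat T -> subcat U -> biprod_closed (Wcl T U).
Proof.
move=> [_ _ Tbiprod _] [_ _ Ubiprod _] Y Z B i1 i2 p1 p2 Hb [TY UY] [TZ UZ].
by split; [apply: (Tbiprod _ _ _ _ _ _ _ Hb) | apply: (Ubiprod _ _ _ _ _ _ _ Hb)].
Qed.

Lemma factors_through0 (W : C -> Prop) (Z X Y : C) :
  W Z -> factors_through W (0 : Mor X Y).
Proof. by move=> WZ; exists Z, 0, 0; rewrite cmp0l. Qed.

Lemma factors_throughD (W : C -> Prop) (X Y : C) (f g : Mor X Y) :
  biprod_closed W -> factors_through W f -> factors_through W g ->
  factors_through W (f + g).
Proof.
move=> Wbiprod [Z1 [a1 [b1 [W1 ->]]]] [Z2 [a2 [b2 [W2 ->]]]].
have [B [i1 [i2 [p1 [p2 Hb]]]]] := biprod_exists HC Z1 Z2.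
have [p1i1 p2i2 p2i1 p1i2 _] := Hb.
exists B, (cmp i1 a1 + cmp i2 a2), (cmp b1 p1 + cmp b2 p2).
split; first exact: Wbiprod Hb W1 W2.
rewrite (cmp_addl HC) !(cmp_addr HC) -!(cmp_assoc HC) ![cmp p1 (cmp _ _)](cmp_assoc HC).
rewrite ![cmp p2 (cmp _ _)](cmp_assoc HC) p1i1 p2i2 p2i1 p1i2 !cmp0l !(cmp_idl HC).
by rewrite !cmp0r addr0 add0r.
Qed.

End Triangulated.

Section TwinCotorsion.
Context {C : TriData} (HC : @IsTriangulated C) {S T U V : C -> Prop}.
Hypotheses (HS : subcat S) (HT : subcat T) (HU : subcat U).
Hypothesis Htw : twin_cotorsion S T U V.

Lemma S_coresolution_W (Z : C) : S Z ->
  exists (T0 S0 : C) (j : Mor Z T0) (t : Mor T0 S0) (e : Mor S0 (sh Z)),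
    [/\ dist j t e, Wcl T U T0 & S S0].
Proof.
move=> SZ; have [[_ STstar] UVcot SV] := Htw.
have [M [T0 [a [b [c [SM TT0 Hd]]]]]] := star_shift1P HC (STstar (sh Z)).
have [k [b' Hd1]] := dist_rotate_back HC (iso_refl HC (sh T0)) Hd.
have [j [a' Hd2]] := dist_rotate_back HC (iso_refl HC (sh Z)) Hd1.
exists T0, M, j, k, a'; split => //; split => //.
exact: (cotorsion_perp_l HC HU UVcot (Ext1_zero_extension_l HC SV Hd2 SZ SM)).
Qed.

Lemma Cminus_of_S_cone (X0 X1 L : C) (a : Mor X0 X1) (b : Mor X1 L)
    (c : Mor L (sh X0)) :
  dist a b c -> S (sh X0) -> S (sh X1) -> Cminus S T U L.
Proof.
move=> Hd SX0 SX1; have [STcot _ _] := Htw.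
have [T0 [S0 [j [t [e [Hdj WT0 SS0]]]]]] := S_coresolution_W SX0.
have [X [x [y Hdx]]] := dist_ext HC (cmp j c).
have [u [v [Hoct _ _ _ _]]] :=
  dist_oct HC (dist_rotate HC (dist_rotate HC Hd)) Hdj Hdx.
have SX : S X := cotorsion_ext_closed_l HC HS STcot Hoct SX1 SS0.
have [K isoK] := sh_esurj HC X.
have [k [x' Hdk]] := dist_rotate_back HC isoK Hdx.
by exists K, T0, k, (cmp j c), x'; split=> //; exists X.
Qed.

Lemma Cminus_extension_W (L M W : C) (u : Mor L M) (v : Mor M W)
    (w : Mor W (sh L)) :
  Cminus S T U L -> dist u v w -> Wcl T U W -> Cminus S T U M.
Proof.
have [STcot UVcot _] := Htw.
case=> K [T0 [k [l [l' [SK [TT0 UT0] HdL]]]]] Hd [TW UW].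
have [W' [x [y Hdx]]] := dist_ext HC (cmp u k).
have [u' [v' [Hoct _ _ _ _]]] := dist_oct HC HdL Hd Hdx.
exists K, W', (cmp u k), x, y; split=> //; split.
- exact: (cotorsion_ext_closed_r HC HT STcot Hoct TT0 TW).
- exact: (cotorsion_ext_closed_l HC HU UVcot Hoct UT0 UW).
Qed.

Section Cone.
Variables (A B : C) (f : Mor A B).
Variables (SAm1 WA : C) (sA : Mor SAm1 A) (wA : Mor A WA) (hA : Mor WA (sh SAm1)).
Hypotheses (HSA : S (sh SAm1)) (HWA : Wcl T U WA) (HdA : dist sA wA hA).
Variables (Mf : C) (mf : Mor B Mf) (hf : Mor Mf (sh SAm1)).
Hypothesis Hdf : dist (cmp f sA) mf hf.

Lemma comp_mf_f_through_WA : exists c : Mor WA Mf, cmp c wA = cmp mf f.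
Proof.
have [c [Hc _]] := dist_mor HC (a := idm SAm1) (b := f) HdA Hdf (esym (cmp_idr HC _)).
by exists c.
Qed.

Lemma factors_comp_mf_f (Y : C) (a : Mor Mf Y) :
  factors_through (Wcl T U) (cmp (cmp a mf) f).
Proof.
have [c Hc] := comp_mf_f_through_WA.
by exists WA, wA, (cmp a c); split=> //; rewrite -!(cmp_assoc HC) Hc.
Qed.

Lemma precomp_mf_lift (Y : C) (beta : Mor B Y) :
  factors_through (Wcl T U) (cmp beta f) -> exists a : Mor Mf Y, cmp a mf = beta.
Proof.
have [[SText _] _ _] := Htw.
case=> Z [p [q [[TZ _] beta_f]]]; apply: (dist_extend HC Hdf).
rewrite (cmp_assoc HC) beta_f -(cmp_assoc HC).
by rewrite (Ext1_zero_desusp HC SText HSA TZ (cmp p sA)) (cmp0r HC).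
Qed.

Lemma precomp_mf_inj (Y : C) (a b : Mor Mf Y) : Cplus T U V Y ->
  factors_through (Wcl T U) (cmp a mf - cmp b mf) ->
  factors_through (Wcl T U) (a - b).
Proof.
have [[SText _] _ SVext] := Htw.
move=> /(star_shift1P HC) [W1 [V0 [e [g [h [WW1 VV0 HdY]]]]]].
case=> Z [p [q [[TZ UZ] Hpq]]].
have [p' Hp'] := dist_extend HC Hdf (Ext1_zero_desusp HC SText HSA TZ (cmp p (cmp f sA))).
have E : cmp (a - b - cmp q p') mf = 0.
  by rewrite !(cmpBl HC) -(cmp_assoc HC) Hp' Hpq subrr.
have [r Hr] := dist_extend HC (dist_rotate HC Hdf) E.
have [t Ht] := dist_lift HC HdY (SVext _ _ HSA VV0 (cmp g r)).
have -> : a - b = cmp q p' + cmp e (cmp t hf).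
  by rewrite (cmp_assoc HC) Ht Hr [cmp q p' + _]addrC subrK.
apply: (factors_throughD HC (Wcl_biprod_closed HT HU)).
- by exists Z, p', q.
- by exists W1, (cmp t hf), e.
Qed.

Lemma Cminus_cone : Cminus S T U B -> Cminus S T U Mf.
Proof.
have [[SText _] _ _] := Htw.
case=> S1 [W2 [s1 [w1 [h1 [SS1 WW2 HdB]]]]].
have [lam Hlam] :=
  dist_lift HC HdB (Ext1_zero_desusp HC SText HSA WW2.1 (cmp w1 (cmp f sA))).
have [L [l1 [l2 HdL]]] := dist_ext HC lam.
have Hdf' : dist (cmp s1 lam) mf hf by rewrite Hlam.
have [u [v [Hoct _ _ _ _]]] := dist_oct HC HdL HdB Hdf'.
exact: (Cminus_extension_W (Cminus_of_S_cone HdL HSA (shiftm1_sh HS SS1)) Hoct WW2).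
Qed.

End Cone.
End TwinCotorsion.

Unset Implicit Arguments.

Theorem proposition4p2 (C : TriData) (HC : @IsTriangulated C)
  (S T U V : C -> Prop)
  (HS : subcat S) (HT : subcat T) (HU : subcat U) (HV : subcat V)
  (Htw : twin_cotorsion S T U V)
  (A B : C) (HA : Cminus S T U A) (f : Mor A B)
  (* S_A[-1] -sA-> A -wA-> W_A -> S_A, with S_A := sh SAm1 *)
  (SAm1 WA : C) (sA : Mor SAm1 A) (wA : Mor A WA) (hA : Mor WA (sh SAm1))
  (HSA : S (sh SAm1)) (HWA : Wcl T U WA) (HdA : dist sA wA hA)
  (* S_A[-1] -(f o sA)-> B -mf-> M_f -> S_A *)
  (Mf : C) (mf : Mor B Mf) (hf : Mor Mf (sh SAm1))
  (Hdf : dist (cmp f sA) mf hf) :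
  [/\ factors_through (Wcl T U) (cmp mf f),
      (forall Y : C, Cplus T U V Y ->
        [/\ (forall a : Mor Mf Y,
               factors_through (Wcl T U) (cmp (cmp a mf) f)),
            (forall a b : Mor Mf Y,
               factors_through (Wcl T U) (cmp a mf - cmp b mf) ->
               factors_through (Wcl T U) (a - b))
          & (forall beta : Mor B Y,
               factors_through (Wcl T U) (cmp beta f) ->
               exists a : Mor Mf Y, factors_through (Wcl T U) (cmp a mf - beta))])
    & (Cminus S T U B -> Cminus S T U Mf)].
Proof.
split.
- rewrite -[mf](cmp_idl HC); exact: (factors_comp_mf_f HC HWA HdA Hdf).
- move=> Y HY; split.
  + exact: (factors_comp_mf_f HC HWA HdA Hdf).
  + by move=> a b; apply: (precomp_mf_inj HC HT HU Htw HSA Hdf HY).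
  + move=> beta /(precomp_mf_lift HC Htw HSA Hdf) [a <-].
    by exists a; rewrite subrr; apply: (factors_through0 HC _ _ HWA).
- exact: (Cminus_cone HC HS HT HU Htw HSA Hdf).
Qed.
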